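(* A tetrahedron $\mathcal T$ has an obtuse cycle if and only if there exists $O\in\operatorname{int}\mathcal T$ such that $(\mathcal T,O)$ is mono-unstable.
   Context: An obtuse cycle of a tetrahedron is a labelling $A,B,C,D$ of its four vertices (giving the edge cycle $A-B-C-D-A$) such that the face angles $\angle ABC$, $\angle BCD$ and $\angle CDA$ are all obtuse. For $O\in\operatorname{int}\mathcal T$, $(\mathcal T,O)$ is in (unstable) equilibrium on a vertex $V$ if the plane perpendicular to $[O,V]$ at $V$ supports $\mathcal T$; $(\mathcal T,O)$ is mono-unstable if exactly one vertex carries such an equilibrium. *)

From HB Require Import structures.
From mathcomp Require Import all_boot all_order all_algebra all_fingroup.
From mathcomp Require Import all_classical all_reals all_analysis.
Set Implicit Arguments. Unset Strict Implicit. Unset Printing Implicit Defensive.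
Import Order.TTheory GRing.Theory Num.Theory.
Import numFieldNormedType.Exports.
Local Open Scope classical_set_scope.
Local Open Scope ring_scope.

Section Tetra.
Variable R : realType.
Notation pt := 'rV[R]_3.

Definition dotp (u v : pt) : R := \sum_(i < 3) u 0 i * v 0 i.

Definition nondeg_tetra (P : 'I_4 -> pt) : Prop :=
  \det (\matrix_(i < 3) (P (lift ord0 i) - P ord0)) != 0.

Definition tetra (P : 'I_4 -> pt) : set pt :=
  [set X | exists w : 'I_4 -> R, (forall i, 0 <= w i) /\ \sum_(i < 4) w i = 1
                                 /\ X = \sum_(i < 4) w i *: P i].

Definition obtuse_angle (A B C : pt) : Prop := dotp (A - B) (C - B) < 0.

Definition has_obtuse_cycle (P : 'I_4 -> pt) : Prop :=
  exists s : 'S_4,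
    let A := P (s 0) in let B := P (s 1) in
    let C := P (s 2) in let D := P (s 3) in
    [/\ obtuse_angle A B C, obtuse_angle B C D & obtuse_angle C D A].

Definition perp_plane_supports (T : set pt) (O V : pt) : Prop :=
  (forall X, T X -> dotp (X - V) (V - O) <= 0) \/
  (forall X, T X -> 0 <= dotp (X - V) (V - O)).

Definition equilibrium_on (P : 'I_4 -> pt) (O : pt) (i : 'I_4) : Prop :=
  perp_plane_supports (tetra P) O (P i).

Definition mono_unstable (P : 'I_4 -> pt) (O : pt) : Prop :=
  exists i, equilibrium_on P O i /\ forall j, equilibrium_on P O j -> j = i.

End Tetra.

(* Write u k = P k - O, where O = \sum_k w k *: P k with barycentric weights
   w k > 0, so that \sum_k w k * (u k . v) = 0 for every v.  For O inside the
   tetrahedron, vertex j carries an equilibrium iff there is no "ascent" j -> k,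
   i.e. no k with u j . (u k - u j) > 0; ascents strictly increase |u|.

   If only i carries an equilibrium, let d be a vertex other than i of largest
   |u| among those entered by an ascent c -> d.  Then d -> i, and the balance
   identity with v = u d rules out an ascent from the fourth vertex b to d, so b
   ascends to i or to c.  Further instances, with v = u k - u j along an ascent
   j -> k, give the obtuse angles at b, c and d of the cycle i, b, c, d.

   Conversely, for an obtuse cycle a, b, c, d, put O at the weights
   t^2, t, 1 - t - 2 t^2, t^2.  For small t > 0 the obtuse angles at b, c, d
   yield ascents b -> a, c -> d and d -> a, so the farthest vertex, which always
   carries an equilibrium, is a, and it is the only one. *)

From HB Require Import structures.
From mathcomp Require Import all_boot all_order all_algebra all_fingroup.
From mathcomp Require Import all_classical all_reals all_analysis.
From mathcomp Require Import ring lra.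
Import Order.TTheory GRing.Theory Num.Theory.
Import numFieldNormedType.Exports.
Local Open Scope classical_set_scope.
Local Open Scope ring_scope.

Section Dotp.
Context {R : realType}.
Implicit Types u v : 'rV[R]_3.

Lemma dotpC u v : dotp u v = dotp v u.
Proof. by apply: eq_bigr => i _; rewrite mulrC. Qed.

Lemma dotpDl u1 u2 v : dotp (u1 + u2) v = dotp u1 v + dotp u2 v.
Proof. by rewrite /dotp -big_split; apply: eq_bigr => i _; rewrite mxE mulrDl. Qed.

Lemma dotpZl a u v : dotp (a *: u) v = a * dotp u v.
Proof. by rewrite /dotp mulr_sumr; apply: eq_bigr => i _; rewrite mxE mulrA. Qed.

Lemma dotpNl u v : dotp (- u) v = - dotp u v.
Proof. by rewrite -scaleN1r dotpZl mulN1r. Qed.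

Lemma dotpBl u1 u2 v : dotp (u1 - u2) v = dotp u1 v - dotp u2 v.
Proof. by rewrite dotpDl dotpNl. Qed.

Lemma dotpBr u v1 v2 : dotp u (v1 - v2) = dotp u v1 - dotp u v2.
Proof. by rewrite !(dotpC u) dotpBl. Qed.

Lemma dotp0l v : dotp 0 v = 0.
Proof. by rewrite -(scale0r 0) dotpZl mul0r. Qed.

Lemma dotp_suml (I : Type) (r : seq I) (Q : pred I) (F : I -> 'rV[R]_3) v :
  dotp (\sum_(i <- r | Q i) F i) v = \sum_(i <- r | Q i) dotp (F i) v.
Proof. by elim/big_rec2: _ => [|i a b _ <-]; rewrite ?dotp0l ?dotpDl. Qed.

Lemma dotpp_ge0 u : 0 <= dotp u u.
Proof. by apply: sumr_ge0 => i _; rewrite -expr2 sqr_ge0. Qed.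

Lemma dotpp_eq0 u : (dotp u u == 0) = (u == 0).
Proof.
apply/eqP/eqP => [|->]; last by rewrite dotp0l.
move=> /eqP; rewrite psumr_eq0 => [/allP u0|i _]; last by rewrite -expr2 sqr_ge0.
apply/rowP => i; rewrite !mxE.
by have /(_ (mem_index_enum i)) := u0 i; rewrite mulf_eq0 orbb => /eqP.
Qed.

Lemma dotp_amgm u v : 2 * dotp u v <= dotp u u + dotp v v.
Proof.
have := dotpp_ge0 (u - v); rewrite !dotpBl !dotpBr (dotpC v u); lra.
Qed.

End Dotp.

Lemma subrBB {V : zmodType} (x y z : V) : (x - z) - (y - z) = x - y.
Proof. by rewrite opprB addrA subrK. Qed.

Section Tetrahedron.
Context {R : realType}.
Variable P : 'I_4 -> 'rV[R]_3.
Implicit Types (O V : 'rV[R]_3) (w : 'I_4 -> R).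

Lemma sum_vertex_weight k : \sum_(i < 4) (i == k)%:R = 1 :> R.
Proof. by rewrite (bigD1 k) //= eqxx big1 ?addr0 // => i /negbTE ->. Qed.

Lemma comb_vertex_weight k : \sum_(i < 4) (i == k)%:R *: P i = P k.
Proof.
by rewrite (bigD1 k) //= eqxx scale1r big1 ?addr0 // => i /negbTE ->; rewrite scale0r.
Qed.

Lemma tetra_vertex k : tetra P (P k).
Proof.
exists (fun i => (i == k)%:R); split => [i|]; first by rewrite ler0n.
by rewrite sum_vertex_weight comb_vertex_weight.
Qed.

Lemma barycentricB w V : \sum_k w k = 1 ->
  \sum_k w k *: P k - V = \sum_k w k *: (P k - V).
Proof.
move=> w1; rewrite -{1}[V]scale1r -w1 scaler_suml -sumrB.
by apply: eq_bigr => k _; rewrite scalerBr.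
Qed.

(* [P k] lies strictly beyond the plane through [P j] perpendicular to [O P j]. *)
Definition ascent O j k : bool := 0 < dotp (P k - P j) (P j - O).

Lemma no_ascent_equilibrium O j :
  (forall k, ~~ ascent O j k) -> equilibrium_on P O j.
Proof.
move=> noasc; left => _ [w [w0 [w1 ->]]].
rewrite barycentricB // dotp_suml; apply: sumr_le0 => k _.
by rewrite dotpZl mulr_ge0_le0 // leNgt noasc.
Qed.

Lemma equilibrium_onP O j : tetra P O ->
  equilibrium_on P O j <-> forall k, ~~ ascent O j k.
Proof.
move=> TO; split=> [[] supp k|]; last exact: no_ascent_equilibrium.
  by rewrite -leNgt; apply: supp (tetra_vertex k).
have /eqP : dotp (P j - O) (P j - O) = 0.
  apply/eqP; rewrite eq_le dotpp_ge0 andbT -oppr_ge0 -dotpNl opprB.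
  exact: supp.
by rewrite /ascent dotpp_eq0 => /eqP->; rewrite dotpC dotp0l ltxx.
Qed.

Lemma exists_equilibrium O : exists j, equilibrium_on P O j.
Proof.
pose r k := dotp (P k - O) (P k - O).
have [j _ jmax] := @arg_maxP _ _ _ ord0 xpredT r isT.
exists j; apply: no_ascent_equilibrium => k; rewrite -leNgt.
rewrite -(subrBB (P k) (P j) O) dotpBl.
have rkj : r k <= r j := jmax k isT.
have := dotp_amgm (P k - O) (P j - O); move: rkj; rewrite /r; lra.
Qed.

Lemma ascent_comb w j k : \sum_m w m = 1 ->
  ascent (\sum_m w m *: P m) j k = (0 < - \sum_m w m * dotp (P m - P j) (P k - P j)).
Proof.
move=> w1; rewrite /ascent -[P j - _]opprB barycentricB // dotpC dotpNl dotp_suml.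
by under eq_bigr do rewrite dotpZl.
Qed.

End Tetrahedron.

Section Ascent.
Context {R : realType} {P : 'I_4 -> 'rV[R]_3} {O : 'rV[R]_3}.
Local Notation u k := (P k - O).
Local Notation ascent := (ascent P O).

Lemma ascentE j k : ascent j k = (0 < dotp (u j) (u k - u j)).
Proof. by rewrite /ascent subrBB dotpC. Qed.

Lemma ascent_irrefl j : ~~ ascent j j.
Proof. by rewrite /ascent subrr dotp0l ltxx. Qed.

Lemma ascent_dotp_gt0 {j k} : ascent j k -> 0 < dotp (u j) (u k).
Proof.
rewrite ascentE; move: (u j) (u k) => x y.
by rewrite dotpBr; have := dotpp_ge0 x; lra.
Qed.

Lemma ascent_target_gt0 {j k} : ascent j k -> 0 < dotp (u k) (u k - u j).
Proof.
rewrite ascentE; move: (u j) (u k) => x y.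
by have := dotpp_ge0 (y - x); rewrite !dotpBl !dotpBr (dotpC y x); lra.
Qed.

Lemma ascent_dotpp_lt {j k} : ascent j k -> dotp (u j) (u j) < dotp (u k) (u k).
Proof.
rewrite ascentE; move: (u j) (u k) => x y.
by rewrite dotpBr; have := dotp_amgm x y; lra.
Qed.

Lemma obtuse_angleC (A B C : 'rV[R]_3) : obtuse_angle A B C = obtuse_angle C B A.
Proof. by rewrite /obtuse_angle dotpC. Qed.

Lemma obtuse_of_ascent {a b c} :
  ascent b c -> dotp (u a) (u c - u b) <= 0 -> obtuse_angle (P a) (P b) (P c).
Proof.
rewrite ascentE /obtuse_angle -(subrBB (P a) (P b) O) -(subrBB (P c) (P b) O).
move: (u a) (u b) (u c) => x y z.
by rewrite dotpBl (dotpC y); lra.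
Qed.

End Ascent.

Section MatrixNorm.
Context {R : realType}.

Lemma entry_le_mx_norm m n (A : 'M[R]_(m, n)) i j : `|A i j| <= `|A|.
Proof.
rewrite [X in _ <= X]mx_normrE.
exact: (le_bigmax _ (fun ij : 'I_m * 'I_n => `|A ij.1 ij.2|) (i, j)).
Qed.

Lemma norm_mulmx_entry m n (x : 'rV[R]_m) (N : 'M[R]_(m, n)) j :
  `|(x *m N) 0 j| <= `|x| * \sum_i `|N i j|.
Proof.
rewrite mxE mulr_sumr; apply: le_trans (ler_norm_sum _ _ _) _.
apply: ler_sum => i _; rewrite normrM.
by apply: ler_wpM2r => //; apply: entry_le_mx_norm.
Qed.

End MatrixNorm.

Section Barycentric.
Context {R : realType}.
Variable P : 'I_4 -> 'rV[R]_3.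
Hypothesis nondeg : nondeg_tetra P.
Implicit Types (x O Y Z : 'rV[R]_3) (w : 'I_4 -> R).

Definition edge_mx : 'M[R]_3 := \matrix_(i < 3) (P (lift ord0 i) - P ord0).

Definition bary_lin x k : R :=
  let c := x *m invmx edge_mx in
  if unlift ord0 k is Some i then c 0 i else - \sum_i c 0 i.

(* Barycentric coordinates; junk unless [nondeg_tetra P], since [invmx] of a
   singular matrix is the matrix itself. *)
Definition bary Y k : R := (k == ord0)%:R + bary_lin (Y - P ord0) k.

Lemma bary_linB x1 x2 k : bary_lin (x1 - x2) k = bary_lin x1 k - bary_lin x2 k.
Proof.
rewrite /bary_lin mulmxBl; set N := invmx edge_mx.
case: unliftP => [i _|_]; first by rewrite !mxE.
have -> : \sum_i (x1 *m N - x2 *m N) 0 i = \sum_i (x1 *m N) 0 i - \sum_i (x2 *m N) 0 i.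
  by rewrite -sumrB; apply: eq_bigr => i _; rewrite !mxE.
lra.
Qed.

Lemma bary_linZ a x k : bary_lin (a *: x) k = a * bary_lin x k.
Proof.
rewrite /bary_lin -scalemxAl; case: unliftP => [i _|_]; first by rewrite !mxE.
by rewrite mulrN mulr_sumr; congr (- _); apply: eq_bigr => i _; rewrite !mxE.
Qed.

Lemma baryB Y Z k : bary Y k - bary Z k = bary_lin (Y - Z) k.
Proof. by rewrite /bary opprD addrACA subrr add0r -bary_linB subrBB. Qed.

Lemma bary_extrapolate Y Z a k :
  bary (Y + a *: (Y - Z)) k = bary Y k + a * (bary Y k - bary Z k).
Proof.
have := baryB (Y + a *: (Y - Z)) Y k.
rewrite [Y + _ - Y]addrC addKr bary_linZ -baryB => <-.
by rewrite [RHS]addrC subrK.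
Qed.

Lemma bary0 Y :
  bary Y ord0 = 1 - \sum_i ((Y - P ord0) *m invmx edge_mx) 0 i.
Proof. by rewrite /bary /bary_lin unlift_none eqxx. Qed.

Lemma baryS Y i : bary Y (lift ord0 i) = ((Y - P ord0) *m invmx edge_mx) 0 i.
Proof. by rewrite /bary /bary_lin liftK add0r. Qed.

Lemma bary_sum Y : \sum_k bary Y k = 1.
Proof. by rewrite big_ord_recl bary0 (eq_bigr _ (fun i _ => baryS Y i)) subrK. Qed.

Lemma comb_subP0 w : \sum_k w k = 1 ->
  \sum_k w k *: P k - P ord0 = (\row_i w (lift ord0 i)) *m edge_mx.
Proof.
move=> w1; rewrite barycentricB // big_ord_recl subrr scaler0 add0r mulmx_sum_row.
by apply: eq_bigr => i _; rewrite rowK mxE.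
Qed.

Lemma edge_mx_unit : edge_mx \in unitmx.
Proof. by rewrite unitmxE unitfE. Qed.

Lemma bary_comb w : \sum_k w k = 1 -> forall k, bary (\sum_k w k *: P k) k = w k.
Proof.
have edge_unit := edge_mx_unit.
move=> w1 k; case: (unliftP ord0 k) => [i ->|->].
  by rewrite baryS comb_subP0 // mulmxK // mxE.
rewrite bary0 comb_subP0 // mulmxK //; under eq_bigr do rewrite mxE.
by move: w1; rewrite big_ord_recl; lra.
Qed.

Lemma comb_bary Y : \sum_k bary Y k *: P k = Y.
Proof.
have := comb_subP0 _ (bary_sum Y).
have -> : \row_i bary Y (lift ord0 i) = (Y - P ord0) *m invmx edge_mx.
  by apply/rowP => i; rewrite mxE baryS.
by rewrite mulmxKV ?edge_mx_unit // => /addIr.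
Qed.

Lemma bary_vertex k : bary (P k) k = 1.
Proof.
by rewrite -{1}(comb_vertex_weight P k) bary_comb ?sum_vertex_weight // eqxx.
Qed.

Lemma tetraP Y : tetra P Y <-> forall k, 0 <= bary Y k.
Proof.
split=> [[w [w0 [w1 ->]]] k|b0]; first by rewrite bary_comb.
by exists (bary Y); rewrite bary_sum comb_bary.
Qed.

Definition bary_lip : R := \sum_i \sum_j `|invmx edge_mx j i|.

Lemma bary_lip_ge0 : 0 <= bary_lip.
Proof. by do 2![apply: sumr_ge0 => ? _]. Qed.

Lemma bary_lin_le x k : `|bary_lin x k| <= `|x| * bary_lip.
Proof.
rewrite /bary_lin /bary_lip mulr_sumr.
have entry_le i : `|(x *m invmx edge_mx) 0 i| <= `|x| * \sum_j `|invmx edge_mx j i|.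
  exact: norm_mulmx_entry.
case: unliftP => [i _|_].
  apply: le_trans (entry_le i) _; rewrite [leRHS](bigD1 i) //= lerDl.
  by apply: sumr_ge0 => j _; apply: mulr_ge0 => //; apply: sumr_ge0.
by rewrite normrN; apply: le_trans (ler_norm_sum _ _ _) _; apply: ler_sum.
Qed.

Lemma interior_tetraP O : interior (tetra P) O <-> forall k, 0 < bary O k.
Proof.
split=> [/nbhs_ballP[e e0 ballT] k|b0].
  pose t := e / (2 * (`|O - P k| + 1)).
  have t_e : t * (2 * (`|O - P k| + 1)) = e by rewrite divfK // lt0r_neq0 ?mulr_gt0 ?ltr_wpDl.
  have t0 : 0 < t by rewrite divr_gt0 ?mulr_gt0 ?ltr_wpDl.
  have : tetra P (O + t *: (O - P k)).
    apply: ballT; rewrite -ball_normE /= opprD addrA subrr sub0r normrN normrZ gtr0_norm //.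
    by have := mulr_ge0 (ltW t0) (normr_ge0 (O - P k)); lra.
  by move=> /tetraP /(_ k); rewrite bary_extrapolate bary_vertex; nra.
have [j _ jmin] := @arg_minP _ _ _ ord0 xpredT (bary O) isT.
pose e := bary O j / (bary_lip + 1).
have lip0 := bary_lip_ge0.
have e_lip : e * (bary_lip + 1) = bary O j by rewrite divfK // lt0r_neq0 // ltr_wpDl.
have e0 : 0 < e by rewrite divr_gt0 // ltr_wpDl.
apply/nbhs_ballP; exists e => // Y; rewrite -ball_normE /= distrC => OY.
apply/tetraP => k; have jk : bary O j <= bary O k := jmin k isT.
have := bary_lin_le (Y - O) k; rewrite -baryB ler_norml => /andP[lo _].
have : `|Y - O| * bary_lip <= e * bary_lip by rewrite ler_wpM2r // ltW.
lra.
Qed.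

End Barycentric.

Lemma labelled_cases (s : 'S_4) k : [\/ k = s 0, k = s 1, k = s 2 | k = s 3].
Proof.
rewrite -(permKV s k); case: (s^-1 k)%g => [[|[|[|[|//]]]] lt];
  [constructor 1 | constructor 2 | constructor 3 | constructor 4];
  by congr (s _); apply: val_inj.
Qed.

Lemma sum_labelled {V : nmodType} (s : 'S_4) (F : 'I_4 -> V) :
  \sum_k F k = F (s 0) + F (s 1) + F (s 2) + F (s 3).
Proof.
rewrite (reindex_perm s) /= !big_ord_recl big_ord0 addr0 !addrA.
by congr (_ + _ + _ + _); congr (F (s _)); apply: val_inj.
Qed.

Lemma perm_of_uniq (a b c d : 'I_4) : uniq [:: a; b; c; d] ->
  exists s : 'S_4, [/\ s 0 = a, s 1 = b, s 2 = c & s 3 = d].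
Proof.
move=> abcd; pose f (k : 'I_4) := nth a [:: a; b; c; d] k.
have f_inj : injective f by move=> k1 k2 /eqP; rewrite nth_uniq // => /eqP /val_inj.
by exists (perm f_inj); rewrite !permE.
Qed.

Lemma perm_completing (a c d : 'I_4) : uniq [:: a; c; d] ->
  exists s : 'S_4, [/\ s 0 = a, s 2 = c & s 3 = d].
Proof.
move=> acd; have : (0 < #|[predC [:: a; c; d]]|)%N.
  rewrite -(ltn_add2l #|[:: a; c; d]|) addn0 cardC card_ord.
  exact: leq_ltn_trans (card_size _) _.
case/card_gt0P => b; rewrite inE => b_new.
have [|s [s0 _ s2 s3]] := @perm_of_uniq a b c d; last by exists s.
rewrite (perm_uniq (permEl (perm_catCA [:: a] [:: b] [:: c; d]))) /=.
by rewrite -/(uniq [:: a; c; d]) b_new.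
Qed.

Section Balanced.
Context {R : realType} {P : 'I_4 -> 'rV[R]_3} {O : 'rV[R]_3} {w : 'I_4 -> R}.
Hypotheses (w_gt0 : forall k, 0 < w k) (w_sum : \sum_k w k = 1)
  (O_comb : \sum_k w k *: P k = O).
Local Notation u k := (P k - O).
Local Notation ascent := (ascent P O).

Lemma balanced_dotp v : \sum_k w k * dotp (u k) v = 0.
Proof.
transitivity (dotp (\sum_k w k *: u k) v).
  by rewrite dotp_suml; apply: eq_bigr => k _; rewrite dotpZl.
by rewrite -barycentricB // O_comb subrr dotp0l.
Qed.

Lemma balanced_dotp_neg p v m : 0 < dotp (u p) v ->
  (forall k, k != m -> 0 <= dotp (u k) v) -> dotp (u m) v < 0.
Proof.
move=> p_gt0 nonneg; rewrite ltNge; apply/negP => m_ge0.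
have terms_ge0 k : 0 <= w k * dotp (u k) v.
  apply: mulr_ge0; first exact: ltW.
  by case: (eqVneq k m) => [->|/nonneg].
have /eqP : w p * dotp (u p) v = 0.
  exact: (psumr_eq0P (fun k _ => terms_ge0 k) (balanced_dotp v)).
by rewrite mulf_eq0 gt_eqF //= => /eqP p0; rewrite p0 ltxx in p_gt0.
Qed.

Section Chain.
Variable s : 'S_4.
Local Notation a := (s 0).
Local Notation b := (s 1).
Local Notation c := (s 2).
Local Notation d := (s 3).
Hypotheses (da : ascent d a) (cd : ascent c d).

Lemma chain_bd : dotp (u b) (u d) < 0.
Proof.
apply: (balanced_dotp_neg c) => [|k]; first exact: ascent_dotp_gt0 cd.
case: (labelled_cases s k) => ->; rewrite ?eqxx // => _.
- by rewrite dotpC; exact: ltW (ascent_dotp_gt0 da).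
- exact: ltW (ascent_dotp_gt0 cd).
- exact: dotpp_ge0.
Qed.

Lemma chain_ca_of_ba : ascent b a -> dotp (u c) (u a) < 0.
Proof.
move=> ba; apply: (balanced_dotp_neg b) => [|k]; first exact: ascent_dotp_gt0 ba.
case: (labelled_cases s k) => ->; rewrite ?eqxx // => _.
- exact: dotpp_ge0.
- exact: ltW (ascent_dotp_gt0 ba).
- exact: ltW (ascent_dotp_gt0 da).
Qed.

Lemma chain_ca_of_bc : ascent b c -> dotp (u c) (u a) < 0.
Proof.
move=> bc; rewrite dotpC; apply: (balanced_dotp_neg b) => [|k].
  exact: ascent_dotp_gt0 bc.
case: (labelled_cases s k) => ->; rewrite ?eqxx // => _.
- exact: ltW (ascent_dotp_gt0 bc).
- exact: dotpp_ge0.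
- by rewrite dotpC; exact: ltW (ascent_dotp_gt0 cd).
Qed.

Lemma chain_obtuse_b_of_ba : ascent b a -> obtuse_angle (P a) (P b) (P c).
Proof.
move=> ba; rewrite obtuse_angleC; apply: (obtuse_of_ascent ba); apply: ltW.
apply: (balanced_dotp_neg b) => [|k]; first by move: ba; rewrite ascentE.
case: (labelled_cases s k) => ->; rewrite ?eqxx // => _.
- exact: ltW (ascent_target_gt0 ba).
- by move: ba; rewrite ascentE => /ltW.
- rewrite dotpBr (dotpC (u d) (u b)).
  by have := ascent_dotp_gt0 da; have := chain_bd; lra.
Qed.

Lemma chain_obtuse_b_of_bc : ascent b c -> obtuse_angle (P a) (P b) (P c).
Proof.
move=> bc; apply: (obtuse_of_ascent bc); apply: ltW.
apply: (balanced_dotp_neg b) => [|k]; first by move: bc; rewrite ascentE.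
case: (labelled_cases s k) => ->; rewrite ?eqxx // => _.
- by move: bc; rewrite ascentE => /ltW.
- exact: ltW (ascent_target_gt0 bc).
- rewrite dotpBr (dotpC (u d) (u c)) (dotpC (u d) (u b)).
  by have := ascent_dotp_gt0 cd; have := chain_bd; lra.
Qed.

Lemma chain_obtuse_c : dotp (u c) (u a) < 0 -> obtuse_angle (P b) (P c) (P d).
Proof.
move=> ca; apply: (obtuse_of_ascent cd); apply: ltW.
apply: (balanced_dotp_neg c) => [|k]; first by move: cd; rewrite ascentE.
case: (labelled_cases s k) => ->; rewrite ?eqxx // => _.
- rewrite dotpBr !(dotpC (u a)).
  by have := ascent_dotp_gt0 da; lra.
- by move: cd; rewrite ascentE => /ltW.
- exact: ltW (ascent_target_gt0 cd).
Qed.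

Lemma chain_obtuse_d : dotp (u c) (u a) < 0 -> obtuse_angle (P c) (P d) (P a).
Proof.
move=> ca; apply: (obtuse_of_ascent da); rewrite dotpBr.
by have := ascent_dotp_gt0 cd; lra.
Qed.

Lemma obtuse_cycle_of_chain : (exists k, ascent b k) -> has_obtuse_cycle P.
Proof.
move=> [k bk]; exists s => /=.
have [ca obtuse_b] : dotp (u c) (u a) < 0 /\ obtuse_angle (P a) (P b) (P c).
  case: (labelled_cases s k) => ek; rewrite ek in bk.
  - by split; [apply: chain_ca_of_ba | apply: chain_obtuse_b_of_ba].
  - by rewrite (negbTE (ascent_irrefl _)) in bk.
  - by split; [apply: chain_ca_of_bc | apply: chain_obtuse_b_of_bc].
  - by have := ascent_dotp_gt0 bk; rewrite ltNge ltW ?chain_bd.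
by split; [| apply: chain_obtuse_c | apply: chain_obtuse_d].
Qed.

End Chain.

Lemma obtuse_cycle_of_unique_stable i :
  (forall k, ~~ ascent i k) -> (forall j, j != i -> exists k, ascent j k) ->
  has_obtuse_cycle P.
Proof.
move=> stable unstable.
pose inner d := (d != i) && [exists c, ascent c d].
have /existsP[d0 inner_d0] : [exists d, inner d].
  apply: contraT => /existsPn no_inner.
  have to_i j : j != i -> ascent j i.
    move=> /unstable[k jk]; case: (eqVneq k i) => [<-//|ki].
    by have := no_inner k; rewrite /inner ki /=; move/existsPn/(_ j); rewrite jk.
  suff : dotp (u i) (u i) < 0 by rewrite ltNge dotpp_ge0.
  apply: (balanced_dotp_neg (lift i ord0)) => [|k /to_i /ascent_dotp_gt0 /ltW //].
  by apply/ascent_dotp_gt0/to_i; rewrite eq_sym neq_lift.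
have [d /andP[di /existsP[c cd]] dmax] :=
  @arg_maxP _ _ _ d0 inner (fun k => dotp (u k) (u k)) inner_d0.
have da : ascent d i.
  have [t dt] := unstable d di; case: (eqVneq t i) => [<-//|ti].
  have : dotp (u t) (u t) <= dotp (u d) (u d).
    by apply: dmax; rewrite /inner ti; apply/existsP; exists d.
  by rewrite leNgt ascent_dotpp_lt.
have ci : c != i by apply: contraTneq cd => ->; apply: stable.
have cd_neq : c != d by apply: contraTneq cd => ->; apply: ascent_irrefl.
have [s [s0 s2 s3]] : exists s : 'S_4, [/\ s 0 = i, s 2 = c & s 3 = d].
  by apply: perm_completing; rewrite /= !inE negb_or ![i == _]eq_sym ci di cd_neq.
apply: (obtuse_cycle_of_chain s); rewrite ?s0 ?s2 ?s3 //.
by apply: unstable; rewrite -s0 (inj_eq perm_inj).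
Qed.

End Balanced.

Lemma obtuse_cycle_of_mono_unstable {R : realType} (P : 'I_4 -> 'rV[R]_3) O :
  nondeg_tetra P -> interior (tetra P) O -> mono_unstable P O -> has_obtuse_cycle P.
Proof.
move=> nd /(interior_tetraP P nd) bary_gt0 [i [eq_i eq_only_i]].
have TO : tetra P O by apply/(tetraP P nd) => k; exact: ltW.
apply: (obtuse_cycle_of_unique_stable bary_gt0 (bary_sum P O) (comb_bary P nd O) i).
  exact/(equilibrium_onP P O i TO).
move=> j ji; apply/existsP; apply: contraNT ji => /existsPn stable_j.
exact/eqP/eq_only_i/no_ascent_equilibrium.
Qed.

Lemma near0_quadratic_gt0 {R : realType} (A B C : R) : 0 < A ->
  \forall t \near 0^'+, 0 < A + B * t + C * t ^+ 2.
Proof.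
move=> A0; have K0 : 0 < `|B| + `|C| + 1 by rewrite ltr_wpDl ?addr_ge0.
near=> t.
have t0 : 0 < t by near: t; exact: nbhs_right_gt.
have t1 : t <= 1 by near: t; exact: nbhs_right_ltW ltr01.
have tK : t * (`|B| + `|C| + 1) < A.
  by rewrite -ltr_pdivlMr //; near: t; apply: nbhs_right_lt; rewrite divr_gt0.
have normN_le (x : R) : - `|x| <= x by have := ler_norm (- x); rewrite normrN; lra.
have hB : - `|B| * t <= B * t := ler_wpM2r (ltW t0) (normN_le B).
have hC : - `|C| * t ^+ 2 <= C * t ^+ 2 := ler_wpM2r (sqr_ge0 t) (normN_le C).
have hC' : `|C| * t ^+ 2 <= `|C| * t by apply: ler_wpM2l => //; nra.
lra.
Unshelve. all: by end_near.
Qed.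

Section Forward.
Context {R : realType}.
Variables (P : 'I_4 -> 'rV[R]_3) (s : 'S_4).
Local Notation a := (s 0).
Local Notation b := (s 1).
Local Notation c := (s 2).
Local Notation d := (s 3).

Definition cycle_weights (t : R) (k : 'I_4) : R :=
  nth 0 [:: t ^+ 2; t; 1 - t - 2 * t ^+ 2; t ^+ 2] (s^-1 k)%g.

Definition cycle_point t : 'rV[R]_3 := \sum_k cycle_weights t k *: P k.

Lemma sum_cycle_weights (t : R) (F : 'I_4 -> R) :
  \sum_k cycle_weights t k * F k =
  t ^+ 2 * F a + t * F b + (1 - t - 2 * t ^+ 2) * F c + t ^+ 2 * F d.
Proof. by rewrite (sum_labelled s) /cycle_weights !permK. Qed.

Lemma cycle_weights_sum t : \sum_k cycle_weights t k = 1.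
Proof.
by rewrite -(eq_bigr _ (fun k _ => mulr1 _)) (sum_cycle_weights t (fun=> 1)); ring.
Qed.

Hypotheses (obtuse_b : obtuse_angle (P a) (P b) (P c))
  (obtuse_c : obtuse_angle (P b) (P c) (P d))
  (obtuse_d : obtuse_angle (P c) (P d) (P a)).

Lemma cycle_point_ascents : \forall t \near 0^'+,
  [/\ 0 < t, 0 < 1 - t - 2 * t ^+ 2, ascent P (cycle_point t) b a,
      ascent P (cycle_point t) c d & ascent P (cycle_point t) d a].
Proof.
move: obtuse_b obtuse_c obtuse_d; rewrite /obtuse_angle (dotpC (P a - P b)).
move Eb: (dotp (P c - P b) (P a - P b)) => beta.
move Ec: (dotp (P b - P c) (P d - P c)) => gamma.
move Ed: (dotp (P c - P d) (P a - P d)) => delta beta0 gamma0 delta0.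
near=> t.
have t0 : 0 < t by near: t; exact: nbhs_right_gt.
have wc : 0 < 1 + (-1) * t + (-2) * t ^+ 2.
  by near: t; apply: near0_quadratic_gt0.
have qb : 0 < - beta + beta * t
  + (2 * beta - dotp (P a - P b) (P a - P b) - dotp (P d - P b) (P a - P b)) * t ^+ 2.
  by near: t; apply: near0_quadratic_gt0; rewrite oppr_gt0.
have qc : 0 < - gamma + - (dotp (P a - P c) (P d - P c) + dotp (P d - P c) (P d - P c)) * t
  + 0 * t ^+ 2.
  by near: t; apply: near0_quadratic_gt0; rewrite oppr_gt0.
have qd : 0 < - delta + (delta - dotp (P b - P d) (P a - P d)) * t
  + (2 * delta - dotp (P a - P d) (P a - P d)) * t ^+ 2.
  by near: t; apply: near0_quadratic_gt0; rewrite oppr_gt0.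
split=> //; first lra.
all: rewrite ascent_comb ?cycle_weights_sum // sum_cycle_weights subrr dotp0l.
- by rewrite Eb; lra.
- by rewrite Ec; have := mulr_gt0 t0 qc; lra.
- by rewrite Ed; lra.
Unshelve. all: by end_near.
Qed.

Lemma cycle_point_mono_unstable : nondeg_tetra P ->
  exists O, interior (tetra P) O /\ mono_unstable P O.
Proof.
move=> nd; have [t [t0 wc ba cd da]] := filter_ex cycle_point_ascents.
have w_gt0 k : 0 < cycle_weights t k.
  by case: (labelled_cases s k) => ->; rewrite /cycle_weights permK //= exprn_gt0.
have int_O : interior (tetra P) (cycle_point t).
  by apply/(interior_tetraP P nd) => k; rewrite bary_comb ?cycle_weights_sum.
have only_a j : equilibrium_on P (cycle_point t) j -> j = a.
  move=> /(equilibrium_onP _ _ _ (interior_subset int_O)) stable.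
  case: (labelled_cases s j) stable => -> // stable.
  - by have := stable a; rewrite ba.
  - by have := stable d; rewrite cd.
  - by have := stable a; rewrite da.
have [j eq_j] := exists_equilibrium P (cycle_point t).
exists (cycle_point t); split=> //; exists a.
by split=> [|//]; rewrite -(only_a j eq_j).
Qed.

End Forward.

Lemma mono_unstable_of_obtuse_cycle {R : realType} (P : 'I_4 -> 'rV[R]_3) :
  nondeg_tetra P -> has_obtuse_cycle P -> exists O, interior (tetra P) O /\ mono_unstable P O.
Proof. by move=> nd [s /= [ob oc od]]; apply: (cycle_point_mono_unstable P s ob oc od nd). Qed.

Theorem theorem1p10 (R : realType) (P : 'I_4 -> 'rV[R]_3) :
  nondeg_tetra P ->
  (has_obtuse_cycle P <->
   exists O : 'rV[R]_3, (interior (tetra P)) O /\ mono_unstable P O).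
Proof.
move=> nd; split; first exact: mono_unstable_of_obtuse_cycle.
by move=> [X [int_X mono_X]]; apply: obtuse_cycle_of_mono_unstable int_X mono_X.
Qed.
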